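(* Let $G$ be an abelian group, regarded as a discrete group, and let $V\to BG$ be the $\mathrm{PGL}_n(\mathbb{C})$-bundle associated to a homomorphism $\rho:G\to\mathrm{PU}(n)$. Then there is a subgroup $M\subset G$ of finite index such that the restriction $V|_{BM}$ comes from a complex vector bundle of rank $n$ (equivalently, $\rho|_M$ lifts to a linear representation $M\to\mathrm{GL}_n(\mathbb C)$, and the obstruction class of $V|_{BM}$ vanishes).
   Context: $BG$ is the classifying space of the discrete group $G$ (a $K(G,1)$). For a homomorphism $\rho:G\to L$ into a Lie group $L$, the associated flat principal $L$-bundle on $BG$ is $(EG\times L)/G$ with $G$ acting diagonally. A $\mathrm{PGL}_n$-bundle comes from a vector bundle of rank $n$ if it is the projectivization of one, i.e. lifts along $\mathrm{GL}_n\to\mathrm{PGL}_n$. *)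

From HB Require Import structures.
From mathcomp Require Import all_boot all_order all_algebra.
Set Implicit Arguments. Unset Strict Implicit. Unset Printing Implicit Defensive.
Import Order.TTheory GRing.Theory Num.Theory.
Local Open Scope ring_scope.

Definition unitary_mx (C : numClosedFieldType) (n : nat) (A : 'M[C]_n) : Prop :=
  A *m (map_mx Num.conj A)^T = 1%:M.

(* Equality in PGL_n(C): A and B differ by a nonzero scalar. *)
Definition proj_eq (C : numClosedFieldType) (n : nat) (A B : 'M[C]_n) : Prop :=
  exists c : C, c != 0 /\ A = c *: B.

(* A homomorphism rho : G -> PU(n), described through (arbitrary) unitary
   representatives of its values: rho g is unitary, and
   [rho (g + h)] = [rho g][rho h] in PU(n) = U(n)/U(1). *)
Definition PU_hom (G : zmodType) (C : numClosedFieldType) (n : nat)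
    (rho : G -> 'M[C]_n) : Prop :=
  (forall g, unitary_mx (rho g)) /\
  (forall g h, proj_eq (rho (g + h)) (rho g *m rho h)).

Definition is_subgroup (G : zmodType) (M : G -> Prop) : Prop :=
  M 0 /\ (forall x y, M x -> M y -> M (x - y)).

Definition finite_index (G : zmodType) (M : G -> Prop) : Prop :=
  exists s : seq G, forall g, exists2 r, r \in s & M (g - r).

(* rho restricted to M lifts along GL_n(C) -> PGL_n(C) to a linear
   representation M -> GL_n(C). *)
Definition lifts_on (G : zmodType) (C : numClosedFieldType) (n : nat)
    (M : G -> Prop) (rho : G -> 'M[C]_n) : Prop :=
  exists sigma : G -> 'M[C]_n,
    (forall m, M m -> sigma m \in unitmx /\ proj_eq (sigma m) (rho m)) /\
    (forall m1 m2, M m1 -> M m2 -> sigma (m1 + m2) = sigma m1 *m sigma m2).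

From HB Require Import structures.
From mathcomp Require Import all_boot all_order all_algebra.
From mathcomp Require Import spectral.
From mathcomp Require Import ring.
From Stdlib Require Import Classical.
Set Implicit Arguments. Unset Strict Implicit. Unset Printing Implicit Defensive.
Import Order.TTheory GRing.Theory Num.Theory.
Local Open Scope ring_scope.

(* Since G is abelian, rho h * rho g = c(g, h) * rho g * rho h for a scalar
   commutation factor c(g, h) != 0, and c(-, h) is multiplicative.  Take M to
   be the kernel of this pairing, {g | c(g, h) = 1 for all h}: a subgroup.
   - Finite index: matrices rho g whose factors c(g, -) differ are twisted
     eigenvectors of conjugation by some rho h with different eigenvalues,
     hence linearly independent; as dim M_n = n^2, there are finitely many
     cosets.  Concretely, a maximal free subfamily rho s spans every rho g,
     and a nonzero coordinate of rho g on rho r forces g - r in M.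
   - Lifting: the rho m, m in M, commute pairwise, so they have a common
     eigenvector v (over an algebraically closed field); dividing rho m by its
     eigenvalue on v gives a genuine representation of M. *)

Lemma exists_maximal_seq (T : Type) (ok : seq T -> Prop) (B : nat) :
  ok [::] -> (forall s, ok s -> (size s <= B)%N) ->
  exists s, ok s /\ forall x, ~ ok (x :: s).
Proof.
move=> ok0 okB; apply: NNPP => no_max.
have grow s : ok s -> exists x, ok (x :: s).
  move=> oks; apply: NNPP => no_ext; apply: no_max; exists s; split=> // x okxs.
  by apply: no_ext; exists x.
have long k : exists s, ok s /\ size s = k.
  elim: k => [|k [s [oks <-]]]; first by exists [::].
  by have [x okxs] := grow s oks; exists (x :: s).
have [s [oks size_s]] := long B.+1.
by have := okB s oks; rewrite size_s ltnn.
Qed.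

Lemma spanning_subseq (K : fieldType) (vT : vectType K) (T : eqType)
    (f : T -> vT) (P : T -> Prop) :
  exists s : seq T, {in s, forall x, P x} /\ free (map f s) /\
    forall x, P x -> f x \in <<map f s>>%VS.
Proof.
have [||s [[Ps free_s] maximal]] :=
  @exists_maximal_seq T (fun s => {in s, forall x, P x} /\ free (map f s))
    (\dim {: vT}).
- by split => //; rewrite /free span_nil dimv0.
- by move=> s [_ /eqP free_s]; rewrite -(size_map f) -free_s dimvS ?subvf.
exists s; split=> //; split=> // x Px; apply/negPn/negP => x_notin.
apply: (maximal x); split; last by rewrite /= free_cons x_notin.
by move=> y; rewrite inE => /predU1P[->|/Ps].
Qed.

Lemma stablemx_span (F : fieldType) (m n : nat) (V : 'M[F]_(m, n))
    (As : seq 'M[F]_n) (A : 'M[F]_n) :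
  all (fun B => stablemx V B) As -> A \in <<As>>%VS -> stablemx V A.
Proof.
move=> /allP stable_As A_span; rewrite (coord_span (X := in_tuple As) A_span).
rewrite mulmx_sumr; apply: summx_sub => i _.
by rewrite -scalemxAr scalemx_sub // stable_As // mem_nth.
Qed.

Lemma scalemx_unit_inj (F : fieldType) (n : nat) (A : 'M[F]_n.+1) (c d : F) :
  A \in unitmx -> c *: A = d *: A -> c = d.
Proof.
move=> unitA /(congr1 (mulmx^~ (invmx A))); rewrite -!scalemxAl mulmxV //.
by move/matrixP/(_ ord0 ord0); rewrite !mxE eqxx !mulr1.
Qed.

(* The eigenvalue of A on the row vector v, read off a nonzero coordinate of v
   (meaningful when v is an eigenvector of A). *)
Definition eigenvalue_of (F : fieldType) (n : nat) (v : 'rV[F]_n) (A : 'M[F]_n) :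
    F :=
  if [pick j | v 0 j != 0] is Some j then (v *m A) 0 j / v 0 j else 0.

Lemma eigenvalue_of_eq (F : fieldType) (n : nat) (v : 'rV[F]_n) (A : 'M[F]_n)
    (c : F) :
  v != 0 -> v *m A = c *: v -> eigenvalue_of v A = c.
Proof.
move=> v_neq0 vA; rewrite /eigenvalue_of; case: pickP => [j vj_neq0 | v_eq0].
  by rewrite vA mxE mulfK.
by case/eqP: v_neq0; apply/rowP => j; rewrite mxE; apply/eqP/negbFE/v_eq0.
Qed.

Lemma eigenvalue_ofP (F : fieldType) (n : nat) (v : 'rV[F]_n) (A : 'M[F]_n) :
  v != 0 -> stablemx v A -> v *m A = eigenvalue_of v A *: v.
Proof. by move=> v_neq0 /sub_rVP[c vA]; rewrite (eigenvalue_of_eq v_neq0 vA). Qed.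

(* Twisted eigenvectors of Y |-> H Y with distinct factors are independent:
   if H X_i = c_i X_i H for a free family X and H Y = d Y H for
   Y = sum_i k_i X_i, then c_i = d whenever k_i != 0. *)
Lemma free_twisted_coord (F : fieldType) (m p : nat) (H : 'M[F]_m)
    (X : p.-tuple 'M[F]_m) (k c : 'I_p -> F) (d : F) :
  H \in unitmx -> free X ->
  (forall i : 'I_p, H *m X`_i = c i *: (X`_i *m H)) ->
  H *m (\sum_i k i *: X`_i) = d *: ((\sum_i k i *: X`_i) *m H) ->
  forall i : 'I_p, k i != 0 -> c i = d.
Proof.
move=> unitH /freeP freeX twistX twistY i ki_neq0.
suff /freeX/(_ i)/eqP : \sum_i (k i * (c i - d)) *: X`_i = 0.
  by rewrite mulf_eq0 (negbTE ki_neq0) subr_eq0 => /eqP.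
apply: (can_inj (mulmxK unitH)); rewrite mul0mx mulmx_suml.
have -> : \sum_i ((k i * (c i - d)) *: X`_i) *m H
    = H *m (\sum_i k i *: X`_i) - d *: ((\sum_i k i *: X`_i) *m H).
  rewrite mulmx_sumr mulmx_suml scaler_sumr -sumrB; apply: eq_bigr => j _.
  by rewrite -!scalemxAl -scalemxAr twistX !scalerA -scalerBl mulrBr [d * _]mulrC.
by rewrite twistY subrr.
Qed.

Lemma unitmx_neq0 (F : fieldType) (n : nat) (A : 'M[F]_n.+1) :
  A \in unitmx -> A != 0.
Proof.
move=> unitA; apply/eqP => A0; have := @scalemx_unit_inj _ _ A 0 1 unitA.
by rewrite A0 !scaler0 => /(_ erefl)/eqP; rewrite eq_sym oner_eq0.
Qed.

Section CommutatorPairing.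

Variables (G : zmodType) (C : numClosedFieldType) (n : nat).
Variable rho : G -> 'M[C]_n.+1.
Hypothesis rho_PU : PU_hom rho.

Lemma rho_unit g : rho g \in unitmx.
Proof. by have [/(_ g)/mulmx1_unit[]] := rho_PU. Qed.

Lemma rho_mul_unit g h : rho g *m rho h \in unitmx.
Proof. by rewrite unitmx_mul !rho_unit. Qed.

Lemma rhoD g h : exists2 a : C, a != 0 & rho (g + h) = a *: (rho g *m rho h).
Proof. by have [_ /(_ g h)[a [a_neq0 ->]]] := rho_PU; exists a. Qed.

(* The commutation factor c(g, h), determined by rho h rho g = c rho g rho h. *)
Definition comm_factor (g h : G) : C :=
  (rho h *m rho g *m invmx (rho g *m rho h)) 0 0.

(* The defining identity of the commutation factor; it holds because G is
   abelian, so rho (g + h) and rho (h + g) agree. *)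
Lemma comm_factorP g h : rho h *m rho g = comm_factor g h *: (rho g *m rho h).
Proof.
have [a _ rho_gh] := rhoD g h; have [b b_neq0 rho_hg] := rhoD h g.
have twist : rho h *m rho g = (b^-1 * a) *: (rho g *m rho h).
  by rewrite -scalerA -rho_gh addrC rho_hg scalerA mulVf // scale1r.
rewrite /comm_factor twist -scalemxAl mulmxV ?rho_mul_unit //.
by rewrite mxE mxE eqxx mulr1.
Qed.

Lemma comm_factor_neq0 g h : comm_factor g h != 0.
Proof.
apply/eqP => c0; have := unitmx_neq0 (rho_mul_unit h g).
by rewrite comm_factorP c0 scale0r eqxx.
Qed.

Lemma comm_factorD x y h :
  comm_factor (x + y) h = comm_factor x h * comm_factor y h.
Proof.
have [a _ rho_xy] := rhoD x y.
apply: (@scalemx_unit_inj _ _ (rho (x + y) *m rho h)); first exact: rho_mul_unit.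
rewrite -comm_factorP rho_xy -(scalemxAr a (rho h)) -scalemxAl scalerA.
rewrite [_ * a]mulrC -scalerA; congr (a *: _).
rewrite mulmxA (comm_factorP x h) -scalemxAl -!mulmxA (comm_factorP y h).
by rewrite -(scalemxAr (comm_factor y h)) scalerA.
Qed.

(* The subgroup M of the theorem: g whose image commutes with all of rho. *)
Definition comm_kernel (g : G) : Prop := forall h, comm_factor g h = 1.

Lemma comm_kernel_commutes g h :
  comm_kernel g -> rho h *m rho g = rho g *m rho h.
Proof. by move=> Kg; rewrite comm_factorP Kg scale1r. Qed.

Lemma comm_kernel_of_eq x y :
  (forall h, comm_factor x h = comm_factor y h) -> comm_kernel (x - y).
Proof.
move=> Exy h; apply: (mulIf (comm_factor_neq0 y h)).
by rewrite -comm_factorD subrK Exy mul1r.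
Qed.

Lemma comm_kernel_subgroup : is_subgroup comm_kernel.
Proof.
split=> [|x y Kx Ky]; first rewrite -(subrr 0);
  by apply: comm_kernel_of_eq => h //; rewrite Kx Ky.
Qed.

(* M has finite index: representatives are a maximal free subfamily of rho. *)
Lemma comm_kernel_finite_index : finite_index comm_kernel.
Proof.
have [s [_ [free_s span_s]]] := spanning_subseq rho (fun _ => True).
exists s => g; pose X := in_tuple (map rho s); pose k i := coord X i (rho g).
have rho_g : rho g = \sum_i k i *: X`_i := coord_span (X := X) (span_s g I).
have [i ki_neq0] : exists i, k i != 0.
  apply/existsP; apply: contraTT (unitmx_neq0 (rho_unit g)) => /existsPn k0.
  rewrite negbK rho_g big1 // => j _.
  by move/negPn/eqP: (k0 j) => ->; rewrite scale0r.
exists s`_i; first by rewrite mem_nth // -(size_map rho).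
apply: comm_kernel_of_eq => h; symmetry.
apply: (free_twisted_coord (X := X) (k := k) (c := fun j => comm_factor s`_j h)
  (rho_unit h) free_s _ _ ki_neq0) => [j|].
  by rewrite (nth_map 0) -?(size_map rho) //; apply: comm_factorP.
by rewrite -rho_g; apply: comm_factorP.
Qed.

(* On M, rho rescaled by its eigenvalue on a common eigenvector is a
   linear representation lifting rho. *)
Lemma comm_kernel_lifts : lifts_on comm_kernel rho.
Proof.
have [s [Ks [_ span_s]]] := spanning_subseq rho comm_kernel.
have [|v v_neq0 stable_s] := @common_eigenvector C n.+1 (map rho s) (ltn0Sn n).
  by move=> _ _ /mapP[x /Ks Kx ->] /mapP[y _ ->]; apply/esym/comm_kernel_commutes.
pose mu m := eigenvalue_of v (rho m).
have mu_eig m : comm_kernel m -> v *m rho m = mu m *: v.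
  move=> Km; apply: eigenvalue_ofP => //.
  exact: stablemx_span stable_s (span_s m Km).
have mu_neq0 m : comm_kernel m -> mu m != 0.
  move=> Km; apply: contra_neq v_neq0 => mu0; move: (mu_eig m Km).
  rewrite mu0 scale0r => /(congr1 (mulmx^~ (invmx (rho m)))).
  by rewrite mulmxK ?rho_unit // mul0mx.
exists (fun m => (mu m)^-1 *: rho m); split.
  move=> m Km; split; first by rewrite unitmxZ ?unitfE ?invr_eq0 ?mu_neq0 ?rho_unit.
  by exists (mu m)^-1; rewrite invr_eq0 mu_neq0.
move=> m1 m2 K1 K2; have [a a_neq0 rho12] := rhoD m1 m2.
have mu12 : mu (m1 + m2) = a * (mu m1 * mu m2).
  apply: eigenvalue_of_eq => //; rewrite rho12 -(scalemxAr a v) mulmxA mu_eig //.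
  by rewrite -scalemxAl mu_eig // !scalerA mulrA.
rewrite mu12 rho12 -scalemxAl -(scalemxAr (mu m2)^-1 (rho m1)) !scalerA.
congr (_ *: _).
by field; rewrite a_neq0 !mu_neq0.
Qed.

End CommutatorPairing.

Lemma lifts_on_dim0 (G : zmodType) (C : numClosedFieldType)
    (rho : G -> 'M[C]_0) :
  lifts_on (fun _ => True) rho.
Proof.
exists (fun _ => 1%:M); split=> [m _|m1 m2 _ _]; last by rewrite mul1mx.
split; first exact: unitmx1.
by exists 1; split; [exact: oner_neq0 | apply/matrixP => -[]].
Qed.

Theorem proposition4p6 (G : zmodType) (C : numClosedFieldType) (n : nat)
    (rho : G -> 'M[C]_n) :
  PU_hom rho ->
  exists M : G -> Prop,
    is_subgroup M /\ finite_index M /\ lifts_on M rho.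
Proof.
case: n rho => [|n] rho rho_PU.
  exists (fun _ => True); split=> //; split; last exact: lifts_on_dim0.
  by exists [:: 0] => g; exists 0; rewrite ?mem_head.
exists (comm_kernel rho); split; first exact: comm_kernel_subgroup.
by split; [exact: comm_kernel_finite_index | exact: comm_kernel_lifts].
Qed.
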